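(* Let $S$ be a finite set of anchored rectangles in the plane, where the $x$-coordinates of the top-right vertices are pairwise distinct (and likewise their $y$-coordinates). Store $S$ in a leaf-oriented red-black tree $\mathcal{T}$ keyed by $r_x$, and color each $r\in S$ by $\mathit{col}(r):=\max_{v\in N(r)}\mathrm{height}(v)$, where $N(r)$ consists of the leaf storing $r$ together with all internal nodes $v$ with $r_{\max}(\mathit{right}(v))=r$. Then this coloring is conflict-free with respect to points: for every point $q\in\mathbb{R}^2$ contained in at least one rectangle of $S$, some rectangle of $S$ containing $q$ has a color that no other rectangle of $S$ containing $q$ has.
   Context: A rectangle is anchored if its bottom-left vertex is the origin; for such a rectangle $r$, $(r_x,r_y)$ denotes its top-right vertex. A leaf-oriented red-black tree stores the keys in its leaves (one rectangle per leaf, ordered by $r_x$), and each internal node stores a splitting value strictly between consecutive keys, with keys smaller than it in the left subtree and larger in the right subtree. For a node $v$, $\mathit{left}(v)$, $\mathit{right}(v)$ denote its children, $S(v)$ is the set of rectangles stored in leaves of the subtree rooted at $v$, $r_{\max}(v)$ is the rectangle $r\in S(v)$ maximizing $r_y$, and $\mathrm{height}(v)$ is the height of the subtree rooted at $v$ (0 for a leaf). *)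

From mathcomp Require Import all_boot all_order all_algebra.
Set Implicit Arguments. Unset Strict Implicit. Unset Printing Implicit Defensive.
Import Order.TTheory GRing.Theory Num.Theory.
Local Open Scope ring_scope.

(* An anchored rectangle r is represented by its top-right vertex (r_x, r_y);
   it is the closed box [0, r_x] x [0, r_y]. *)
Definition anchored (R : realFieldType) (r : R * R) : bool := (0 < r.1) && (0 < r.2).

Definition in_rect (R : realFieldType) (r q : R * R) : bool :=
  [&& 0 <= q.1, q.1 <= r.1, 0 <= q.2 & q.2 <= r.2].

Inductive rbcolor := Red | Black.

Inductive tree (R : realFieldType) :=
| Leaf of R * R
| Node of rbcolor & R & tree R & tree R.
Arguments Leaf {R}.
Arguments Node {R}.

Section Trees.
Variable R : realFieldType.

Fixpoint leaves (t : tree R) : seq (R * R) :=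
  match t with Leaf r => [:: r] | Node _ _ l rt => leaves l ++ leaves rt end.

Fixpoint height (t : tree R) : nat :=
  match t with Leaf _ => 0%N | Node _ _ l rt => (maxn (height l) (height rt)).+1 end.

Fixpoint is_search_tree (t : tree R) : bool :=
  match t with
  | Leaf _ => true
  | Node _ s l rt =>
      [&& is_search_tree l, is_search_tree rt,
          all (fun p => p.1 < s) (leaves l) & all (fun p => s < p.1) (leaves rt)]
  end.

Definition is_black (c : rbcolor) : bool := if c is Black then true else false.

Definition node_color (t : tree R) : rbcolor :=
  match t with Leaf _ => Black | Node c _ _ _ => c end.

(* number of black internal nodes on every root-to-leaf path (if balanced) *)
Fixpoint black_height (t : tree R) : nat :=
  match t with
  | Leaf _ => 0%N
  | Node c _ l _ => (black_height l + (if c is Black then 1 else 0))%N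
  end.

Fixpoint rb_valid (t : tree R) : bool :=
  match t with
  | Leaf _ => true
  | Node c _ l rt =>
      [&& rb_valid l, rb_valid rt, black_height l == black_height rt &
          (if c is Red then is_black (node_color l) && is_black (node_color rt)
           else true)]
  end.

Definition red_black (t : tree R) : bool := rb_valid t && is_black (node_color t).

Definition is_rmax (t : tree R) (r : R * R) : bool :=
  (r \in leaves t) && all (fun p => p.2 <= r.2) (leaves t).

(* col(r) = max over v in N(r) of height(v), where N(r) = the leaf storing r
   (height 0) together with the internal nodes v with r_max(right v) = r. *)
Fixpoint rect_col (t : tree R) (r : R * R) : nat :=
  match t with
  | Leaf _ => 0%N
  | Node _ _ l rt =>
      maxn (maxn (rect_col l r) (rect_col rt r)) (if is_rmax rt r then height t else 0%N)
  end.

End Trees.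

From mathcomp Require Import all_boot all_order all_algebra.
From mathcomp Require Import zify.
Import Order.TTheory GRing.Theory Num.Theory.
Local Open Scope ring_scope.

(* In every subtree the rectangles containing q have a unique colour maximum,
   by induction on the tree.  At a node v let m = r_max(right v).  If m
   contains q, its colour is height(v), which exceeds every other colour
   given inside the subtree.  Otherwise q is not covered from both sides:
   a rectangle of left(v) containing q has r_x < m_x, a rectangle of right(v)
   containing q has r_y <= m_y, and the boxes are anchored at the origin, so
   m would contain q.  All rectangles containing q thus lie on one side, and
   their colours there agree with their colours in v. *)

Lemma uniq_map_inj_in {T U : eqType} {f : T -> U} {s : seq T} :
  uniq (map f s) -> {in s &, injective f}.
Proof.
elim: s => [|a s IHs] //= /andP [fa_notin uniq_fs] x y.
rewrite !in_cons => /orP [/eqP-> | xs] /orP [/eqP-> | ys] // fxy.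
- by move: fa_notin; rewrite fxy map_f.
- by move: fa_notin; rewrite -fxy map_f.
- exact: IHs.
Qed.

Section ConflictFreeColoring.
Context {R : realFieldType}.
Implicit Types (t u l rt : tree R) (q r m : R * R).

Definition stabbing t q := [seq r <- leaves t | in_rect r q].

Definition unique_max_col t q : Prop :=
  exists2 r, r \in stabbing t q &
    {in stabbing t q, forall r', r' != r -> (rect_col t r' < rect_col t r)%N}.

Lemma rect_col_le_height t r : (rect_col t r <= height t)%N.
Proof. by elim: t => [a|c s l IHl rt IHr] //=; case: (is_rmax rt r); lia. Qed.

Lemma rect_col_notin {t r} : r \notin leaves t -> rect_col t r = 0%N.
Proof.
elim: t => [a|c s l IHl rt IHr] //=.
rewrite mem_cat negb_or => /andP [rNl rNrt].
by rewrite IHl // IHr // /is_rmax (negbTE rNrt).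
Qed.

Lemma exists_rmax t : exists m, is_rmax t m.
Proof.
elim: t => [a|c s l [ml /andP [ml_l ml_max]] rt [mr /andP [mr_rt mr_max]]].
  by exists a; rewrite /is_rmax /= mem_seq1 eqxx /= lexx.
have [le_ml_mr | lt_mr_ml] := leP ml.2 mr.2.
  exists mr; rewrite /is_rmax /= all_cat mem_cat mr_rt orbT mr_max andbT /=.
  by apply/allP => p /(allP ml_max) p_ml; apply: le_trans p_ml le_ml_mr.
exists ml; rewrite /is_rmax /= all_cat mem_cat ml_l ml_max /=.
by apply/allP => p /(allP mr_max) p_mr; apply: le_trans p_mr (ltW lt_mr_ml).
Qed.

Lemma rmax_inj {t a b} :
  uniq (map snd (leaves t)) -> is_rmax t a -> is_rmax t b -> a = b.
Proof.
move=> uniq_y /andP [a_t a_max] /andP [b_t b_max].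
apply: (uniq_map_inj_in uniq_y) => //; apply/eqP.
by rewrite eq_le (allP a_max) ?(allP b_max).
Qed.

Section Node.
Context {c : rbcolor} {s : R} {l rt : tree R}.

Lemma rect_col_Node_rmax m :
  is_rmax rt m -> rect_col (Node c s l rt) m = height (Node c s l rt).
Proof.
move=> m_rmax /=; rewrite m_rmax.
by have := rect_col_le_height l m; have := rect_col_le_height rt m; lia.
Qed.

Lemma rect_col_Node_lt r :
  ~~ is_rmax rt r -> (rect_col (Node c s l rt) r < height (Node c s l rt))%N.
Proof.
move=> /negbTE /= ->.
by have := rect_col_le_height l r; have := rect_col_le_height rt r; lia.
Qed.

Lemma rect_col_Node_left {r} :
  r \notin leaves rt -> rect_col (Node c s l rt) r = rect_col l r.
Proof. by move=> rNrt /=; rewrite (rect_col_notin rNrt) /is_rmax (negbTE rNrt) !maxn0. Qed.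

Lemma rect_col_Node_right {r} :
  r \notin leaves l -> ~~ is_rmax rt r -> rect_col (Node c s l rt) r = rect_col rt r.
Proof. by move=> rNl /negbTE /= ->; rewrite rect_col_notin // max0n maxn0. Qed.

Lemma stabbing_Node q : stabbing (Node c s l rt) q = stabbing l q ++ stabbing rt q.
Proof. exact: filter_cat. Qed.

Hypothesis search : is_search_tree (Node c s l rt).

Lemma leaves_Node_disjoint {r} : r \in leaves l -> r \notin leaves rt.
Proof.
case/and4P: search => _ _ /allP lt_s /allP gt_s rl.
by apply/negP => /gt_s; rewrite ltNge (ltW (lt_s r rl)).
Qed.

Lemma rmax_right_in_rect {q m} :
  is_rmax rt m -> stabbing l q != [::] -> stabbing rt q != [::] -> in_rect m q.
Proof.
rewrite /stabbing -!has_filter => /andP [m_rt /allP below_m].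
move=> /hasP [e el /and4P [q1 qe1 q2 _]] /hasP [e' e'rt /and4P [_ _ _ qe'2]].
case/and4P: search => _ _ /allP lt_s /allP gt_s.
rewrite /in_rect q1 q2 (le_trans qe'2 (below_m _ e'rt)) andbT /= andbT.
exact: le_trans qe1 (ltW (lt_trans (lt_s _ el) (gt_s _ m_rt))).
Qed.

End Node.

Lemma unique_max_col_transfer t u q :
  stabbing t q = stabbing u q -> {in stabbing u q, rect_col t =1 rect_col u} ->
  unique_max_col u q -> unique_max_col t q.
Proof.
rewrite /unique_max_col => -> same_col [r ru max_r].
by exists r => // r' r'u r'r; rewrite !same_col //; apply: max_r.
Qed.

Lemma search_tree_unique_max_col t q :
  is_search_tree t -> uniq (map snd (leaves t)) -> stabbing t q != [::] ->
  unique_max_col t q.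
Proof.
elim: t => [a|c s l IHl rt IHr] search uniq_y.
  rewrite /unique_max_col /stabbing /=; case: ifP => // aq _.
  by exists a => [|r']; rewrite mem_seq1 // => /eqP->; rewrite eqxx.
have [search_l search_rt] : is_search_tree l /\ is_search_tree rt by case/and4P: search.
move: uniq_y; rewrite /= map_cat cat_uniq => /and3P [uniq_l _ uniq_rt].
have [m m_rmax] := exists_rmax rt.
have rmax_m r : is_rmax rt r -> r = m by move/(rmax_inj uniq_rt); apply.
have [mq | mNq] := boolP (in_rect m q).
  move=> _; exists m.
    by case/andP: m_rmax => m_rt _; rewrite stabbing_Node mem_cat !mem_filter mq m_rt orbT.
  move=> r' _ r'm; rewrite [rect_col _ m]rect_col_Node_rmax //; apply: rect_col_Node_lt.
  by apply: contra r'm => /rmax_m ->.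
have [rtNq | rtq] := eqVneq (stabbing rt q) [::].
  rewrite stabbing_Node rtNq cats0 => lq.
  apply: (@unique_max_col_transfer _ l); first by rewrite stabbing_Node rtNq cats0.
    move=> r; rewrite mem_filter => /andP [_ rl].
    exact: rect_col_Node_left (leaves_Node_disjoint search rl).
  exact: IHl.
have lNq : stabbing l q = [::].
  apply/eqP; move: mNq; apply: contraNT => lq.
  exact: (rmax_right_in_rect search m_rmax lq rtq).
move=> _; apply: (@unique_max_col_transfer _ rt); first by rewrite stabbing_Node lNq.
  move=> r; rewrite mem_filter => /andP [rq rrt].
  apply: rect_col_Node_right; first exact: contraL (leaves_Node_disjoint search) rrt.
  by apply: contra mNq => /rmax_m <-.
exact: IHr.
Qed.

End ConflictFreeColoring.

Theorem mainTheorem1 (R : realFieldType) (S : seq (R * R)) (T : tree R) :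
  all (@anchored R) S ->
  uniq [seq r.1 | r <- S] ->
  uniq [seq r.2 | r <- S] ->
  red_black T -> is_search_tree T -> perm_eq (leaves T) S ->
  forall q : R * R,
    has (fun r => in_rect r q) S ->
    exists2 r, (r \in S) && in_rect r q &
      forall r', r' \in S -> in_rect r' q -> r' != r -> rect_col T r' != rect_col T r.
Proof.
move=> _ _ uniq_y _ search perm_TS q stabbed.
have uniq_leaves_y : uniq (map snd (leaves T)) by rewrite (perm_uniq (perm_map snd perm_TS)).
have [|r rq col_max] := search_tree_unique_max_col T q search uniq_leaves_y.
  by rewrite /stabbing -has_filter (perm_has _ perm_TS).
exists r; first by move: rq; rewrite mem_filter (perm_mem perm_TS) andbC.
move=> r' r'S r'q r'r.
by rewrite neq_ltn col_max // mem_filter r'q (perm_mem perm_TS).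
Qed.
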